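(* For every integer $p\ge 0$, the edge set of $K_{4p+3,4p+3,4p+3}\times K_2$ can be partitioned into $2p+2$ planar subgraphs; in particular $\theta(K_{4p+3,4p+3,4p+3}\times K_2)\le 2p+2$.
   Context: The thickness $\theta(G)$ of a graph $G$ is the minimum number of planar subgraphs whose union is $G$. The Kronecker product $G\times H$ of graphs $G$ and $H$ is the graph with vertex set $V(G)\times V(H)$ in which $(g,h)$ and $(g',h')$ are adjacent if and only if $gg'\in E(G)$ and $hh'\in E(H)$. $K_{n,n,n}$ denotes the complete tripartite graph with three parts of size $n$. *)

From Stdlib Require Import Reals Lra.
Open Scope R_scope.

Definition cont_on_01 (f : R -> R * R) : Prop :=
  forall s, 0 <= s <= 1 ->
  forall eps, 0 < eps -> exists delta, 0 < delta /\
    forall t, 0 <= t <= 1 -> Rabs (t - s) < delta ->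
      Rabs (fst (f t) - fst (f s)) < eps /\ Rabs (snd (f t) - snd (f s)) < eps.

(* A simple graph given by a vertex predicate [vert] on a type [V] and an
   adjacency relation [E] (edges are the unordered pairs {u,v} with E u v). *)
Definition planar {V : Type} (vert : V -> Prop) (E : V -> V -> Prop) : Prop :=
  exists (pos : V -> R * R) (arc : V -> V -> R -> R * R),
    (forall u v, vert u -> vert v -> pos u = pos v -> u = v) /\
    (forall u v, E u v ->
       cont_on_01 (arc u v) /\
       arc u v 0 = pos u /\ arc u v 1 = pos v /\
       (forall s t, 0 <= s <= 1 -> 0 <= t <= 1 -> arc u v s = arc u v t -> s = t) /\
       (forall w s, vert w -> 0 < s < 1 -> arc u v s <> pos w)) /\
    (forall u v u' v', E u v -> E u' v' ->
       ~ ((u = u' /\ v = v') \/ (u = v' /\ v = u')) ->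
       forall s t, 0 <= s <= 1 -> 0 <= t <= 1 -> arc u v s = arc u' v' t ->
       exists w, (w = u \/ w = v) /\ (w = u' \/ w = v') /\ arc u v s = pos w).

(* Vertices of K_{n,n,n} x K_2: triples (a, i, s) with part a < 3, index i < n,
   and s : bool the vertex of K_2. *)
Definition kvert (n : nat) (x : nat * nat * bool) : Prop :=
  let '(a, i, _) := x in (a < 3)%nat /\ (i < n)%nat.

(* Kronecker product adjacency: (g,h) ~ (g',h') iff g g' is an edge of
   K_{n,n,n} (different parts) and h h' is an edge of K_2 (h <> h'). *)
Definition kadj (n : nat) (x y : nat * nat * bool) : Prop :=
  kvert n x /\ kvert n y /\
  let '(a, _, s) := x in let '(b, _, t) := y in a <> b /\ s <> t.

From Stdlib Require Import Reals Lra Lia Psatz Arith.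

(* Each colour class is shown planar by a two-page book embedding: vertices
   sit at distinct integer points of the x-axis and every edge is the arc of
   a parabola over the segment joining its ends, drawn above or below the
   axis according to its page.  Two such arcs meet away from their ends only
   if they lie on the same page and their ends interleave (or coincide), so a
   page assignment without interleaving edges yields a planar drawing
   ([book_planar]).

   K_{n,n,n} x K_2 is the union of the six copies of K_{n,n} along the
   6-cycle K_3 x K_2.  Laying the six blocks out in cyclic order, each block
   sorted by a ranking of the indices, a subgraph whose index pairs form a
   relation that is monotone for the two rankings has no interleaving edges
   on either page ([monotone_class_planar]).

   For n = 2K+1 with K = 2p+1, the index pair (i,j) is coloured by the
   residue d = i - j mod n: colour c < K takes d in {2c+1, 2c+2}, colour K
   takes d = 0 and the pairs with 2i = d+1.  Each class lies in a band of
   width one for suitable rankings, hence is monotone; this gives K+1 = 2p+2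
   planar classes ([lemma4p5]). *)

Open Scope R_scope.

Definition page_sign (up : bool) : R := if up then 1 else -1.

Lemma page_sign_agree up up' y :
  0 < page_sign up * y -> 0 < page_sign up' * y -> up = up'.
Proof. destruct up, up'; simpl; intros; auto; lra. Qed.

Definition parab (a b : R) (up : bool) (t : R) : R * R :=
  let X := a + t * (b - a) in (X, page_sign up * ((X - a) * (b - X))).

Lemma parab_0 a b up : parab a b up 0 = (a, 0).
Proof. unfold parab; f_equal; ring. Qed.

Lemma parab_1 a b up : parab a b up 1 = (b, 0).
Proof. unfold parab; f_equal; ring. Qed.

Lemma parab_flip a b up t : parab a b up t = parab b a up (1 - t).
Proof. unfold parab; f_equal; ring. Qed.

Lemma lipschitz_cont_on_01 (f : R -> R * R) (L : R) : 0 <= L ->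
  (forall s t, 0 <= s <= 1 -> 0 <= t <= 1 ->
     Rabs (fst (f t) - fst (f s)) <= L * Rabs (t - s) /\
     Rabs (snd (f t) - snd (f s)) <= L * Rabs (t - s)) ->
  cont_on_01 f.
Proof.
  intros HL Hlip s Hs eps Heps.
  exists (eps / (L + 1)); split; [apply Rdiv_lt_0_compat; lra|].
  intros t Ht Hts.
  assert (Hsmall : L * Rabs (t - s) < eps).
  { apply Rmult_lt_compat_r with (r := L + 1) in Hts; [|lra].
    unfold Rdiv in Hts; rewrite Rmult_assoc, Rinv_l, Rmult_1_r in Hts by lra.
    pose proof (Rabs_pos (t - s)); nra. }
  destruct (Hlip s t Hs Ht); split; lra.
Qed.

Lemma parab_lipschitz a b up s t : 0 <= s <= 1 -> 0 <= t <= 1 ->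
  Rabs (fst (parab a b up t) - fst (parab a b up s)) <= (Rabs (b - a) + (b - a) * (b - a)) * Rabs (t - s) /\
  Rabs (snd (parab a b up t) - snd (parab a b up s)) <= (Rabs (b - a) + (b - a) * (b - a)) * Rabs (t - s).
Proof.
  intros Hs Ht; unfold parab; simpl.
  assert (Hsq : 0 <= (b - a) * (b - a)) by apply Rle_0_sqr.
  pose proof (Rabs_pos (t - s)); pose proof (Rabs_pos (b - a)).
  split.
  - replace (a + t * (b - a) - (a + s * (b - a))) with ((t - s) * (b - a)) by ring.
    rewrite Rabs_mult; nra.
  - replace (page_sign up * ((a + t * (b - a) - a) * (b - (a + t * (b - a)))) -
             page_sign up * ((a + s * (b - a) - a) * (b - (a + s * (b - a)))))
      with (page_sign up * (1 - t - s) * ((t - s) * ((b - a) * (b - a)))) by ring.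
    assert (Hf : Rabs (page_sign up * (1 - t - s)) <= 1).
    { destruct up; simpl; apply Rabs_le; lra. }
    rewrite Rabs_mult, (Rabs_mult (t - s)), (Rabs_pos_eq ((b - a) * (b - a))) by exact Hsq.
    assert (HTQ : 0 <= Rabs (t - s) * ((b - a) * (b - a))) by (apply Rmult_le_pos; lra).
    assert (Rabs (page_sign up * (1 - t - s)) * (Rabs (t - s) * ((b - a) * (b - a)))
            <= 1 * (Rabs (t - s) * ((b - a) * (b - a)))) by (apply Rmult_le_compat_r; lra).
    assert (0 <= Rabs (b - a) * Rabs (t - s)) by (apply Rmult_le_pos; lra).
    lra.
Qed.

Lemma parab_cont a b up : cont_on_01 (parab a b up).
Proof.
  apply (lipschitz_cont_on_01 _ (Rabs (b - a) + (b - a) * (b - a))).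
  - pose proof (Rabs_pos (b - a)); pose proof (Rle_0_sqr (b - a)); unfold Rsqr in *; lra.
  - intros s t; apply parab_lipschitz.
Qed.

Lemma parab_off_axis a b up s : a <> b -> 0 < s < 1 -> snd (parab a b up s) <> 0.
Proof.
  intros Hab Hs; unfold parab; simpl.
  replace ((a + s * (b - a) - a) * (b - (a + s * (b - a))))
    with (s * (1 - s) * ((b - a) * (b - a))) by ring.
  assert (0 < (b - a) * (b - a)) by (apply Rsqr_pos_lt; lra).
  assert (0 < s * (1 - s)) by (apply Rmult_lt_0_compat; lra).
  destruct up; simpl; nra.
Qed.

Lemma parab_interior a b up s : a < b -> 0 < s < 1 ->
  a < fst (parab a b up s) < b /\ 0 < page_sign up * snd (parab a b up s).
Proof.
  intros Hab Hs; unfold parab; simpl.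
  assert (0 < s * (b - a)) by (apply Rmult_lt_0_compat; lra).
  assert (0 < (1 - s) * (b - a)) by (apply Rmult_lt_0_compat; lra).
  split; [lra|].
  replace (page_sign up * (page_sign up * ((a + s * (b - a) - a) * (b - (a + s * (b - a))))))
    with ((page_sign up * page_sign up) * ((s * (b - a)) * ((1 - s) * (b - a)))) by ring.
  assert (Hsq : page_sign up * page_sign up = 1) by (destruct up; simpl; ring).
  rewrite Hsq, Rmult_1_l; apply Rmult_lt_0_compat; lra.
Qed.

Definition overlapping (a b c d : R) : Prop :=
  (a < c /\ c < b /\ b < d) \/ (c < a /\ a < d /\ d < b) \/ (a = c /\ b = d).

Lemma nested_parabolas a b c d X : a <= c -> c < X < d -> d <= b ->
  (X - a) * (b - X) = (X - c) * (d - X) -> a = c /\ b = d.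
Proof.
  intros Hac HX Hdb Heq.
  assert (E : (X - c) * (b - d) + (c - a) * (b - d) + (c - a) * (d - X) = 0) by nra.
  assert (0 <= (X - c) * (b - d)) by nra.
  assert (0 <= (c - a) * (b - d)) by nra.
  assert (0 <= (c - a) * (d - X)) by nra.
  assert ((X - c) * (b - d) = 0) by lra.
  assert ((c - a) * (d - X) = 0) by lra.
  split; nra.
Qed.

Lemma parabolas_meet a b c d X : a < X < b -> c < X < d ->
  (X - a) * (b - X) = (X - c) * (d - X) -> overlapping a b c d.
Proof.
  intros HXab HXcd Heq; unfold overlapping.
  destruct (Rle_dec a c) as [Hac|Hac]; destruct (Rle_dec d b) as [Hdb|Hdb].
  - right; right; exact (nested_parabolas a b c d X Hac HXcd Hdb Heq).
  - destruct (Req_dec a c) as [<-|Hac'].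
    + right; right; symmetry in Heq.
      destruct (nested_parabolas a d a b X ltac:(lra) HXab ltac:(lra) Heq); lra.
    + left; lra.
  - destruct (Req_dec d b) as [->|Hdb'].
    + right; right; symmetry in Heq.
      destruct (nested_parabolas c b a b X ltac:(lra) HXab ltac:(lra) Heq); lra.
    + right; left; lra.
  - right; right; symmetry in Heq.
    destruct (nested_parabolas c d a b X ltac:(lra) HXab ltac:(lra) Heq); lra.
Qed.

Lemma parab_interior_meet a b c d up up' s t :
  a < b -> c < d -> 0 < s < 1 -> 0 <= t <= 1 ->
  parab a b up s = parab c d up' t -> up = up' /\ overlapping a b c d.
Proof.
  intros Hab Hcd Hs Ht Hmeet.
  destruct (parab_interior a b up s Hab Hs) as [HX Hy].
  rewrite Hmeet in HX, Hy.
  assert (Ht' : 0 < t < 1).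
  { split; apply Rnot_le_lt; intros Hle.
    - replace t with 0 in Hy by lra; rewrite parab_0 in Hy; simpl in Hy; lra.
    - replace t with 1 in Hy by lra; rewrite parab_1 in Hy; simpl in Hy; lra. }
  destruct (parab_interior c d up' t Hcd Ht') as [HX' Hy'].
  assert (Hup : up = up') by exact (page_sign_agree _ _ _ Hy Hy').
  split; [exact Hup|]; subst up'.
  unfold parab in Hmeet, HX, HX'; simpl in HX, HX'; injection Hmeet as Hx Hh.
  apply (parabolas_meet a b c d (a + s * (b - a))); [lra | rewrite Hx; lra |].
  rewrite Hx at 3 4; destruct up; simpl in Hh; lra.
Qed.

Section BookEmbedding.
Context {V : Type} (vert : V -> Prop) (E : V -> V -> Prop)
  (pos : V -> nat) (page : V -> V -> bool).
Hypothesis pos_inj : forall u v, vert u -> vert v -> pos u = pos v -> u = v.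
Hypothesis edge_ends : forall u v, E u v -> vert u /\ vert v /\ pos u <> pos v.
Hypothesis edge_sym : forall u v, E u v -> E v u /\ page v u = page u v.
Hypothesis no_interleaving : forall u v u' v', E u v -> E u' v' -> page u v = page u' v' ->
  (pos u < pos v)%nat -> (pos u' < pos v')%nat ->
  ~ (pos u < pos u' /\ pos u' < pos v /\ pos v < pos v')%nat.

Let point (u : V) : R * R := (INR (pos u), 0).
Let arc (u v : V) : R -> R * R := parab (INR (pos u)) (INR (pos v)) (page u v).

Let same_edge (u v u' v' : V) : Prop := (u = u' /\ v = v') \/ (u = v' /\ v = u').

Lemma oriented_arcs_disjoint u v u' v' s t : E u v -> E u' v' ->
  (pos u < pos v)%nat -> (pos u' < pos v')%nat -> ~ same_edge u v u' v' ->
  0 < s < 1 -> 0 <= t <= 1 -> arc u v s <> arc u' v' t.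
Proof.
  intros H1 H2 L1 L2 Hne Hs Ht Hmeet.
  destruct (edge_ends _ _ H1) as [Hu [Hv _]]; destruct (edge_ends _ _ H2) as [Hu' [Hv' _]].
  destruct (parab_interior_meet _ _ _ _ _ _ s t (lt_INR _ _ L1) (lt_INR _ _ L2) Hs Ht Hmeet)
    as [Hpage [Hover|[Hover|[Hu0 Hv0]]]].
  - destruct Hover as [A [B C]]; apply INR_lt in A, B, C.
    exact (no_interleaving u v u' v' H1 H2 Hpage L1 L2 (conj A (conj B C))).
  - destruct Hover as [A [B C]]; apply INR_lt in A, B, C.
    exact (no_interleaving u' v' u v H2 H1 (eq_sym Hpage) L2 L1 (conj A (conj B C))).
  - apply INR_eq in Hu0, Hv0; apply Hne; left; split; apply pos_inj; auto.
Qed.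

Lemma arcs_disjoint u v u' v' s t : E u v -> E u' v' -> ~ same_edge u v u' v' ->
  0 < s < 1 -> 0 <= t <= 1 -> arc u v s <> arc u' v' t.
Proof.
  intros H1 H2 Hne Hs Ht.
  destruct (edge_ends _ _ H1) as [_ [_ D1]]; destruct (edge_ends _ _ H2) as [_ [_ D2]].
  destruct (edge_sym _ _ H1) as [H1' P1]; destruct (edge_sym _ _ H2) as [H2' P2].
  assert (F1 : arc u v s = arc v u (1 - s)) by (unfold arc; rewrite P1; apply parab_flip).
  assert (F2 : arc u' v' t = arc v' u' (1 - t)) by (unfold arc; rewrite P2; apply parab_flip).
  destruct (Nat.lt_gt_cases (pos u) (pos v)) as [[L1|L1] _]; [exact D1|..];
  destruct (Nat.lt_gt_cases (pos u') (pos v')) as [[L2|L2] _]; try exact D2.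
  - apply oriented_arcs_disjoint; auto.
  - rewrite F2; apply oriented_arcs_disjoint; auto; unfold same_edge in *; [tauto | lra].
  - rewrite F1; apply oriented_arcs_disjoint; auto; unfold same_edge in *; [tauto | lra].
  - rewrite F1, F2; apply oriented_arcs_disjoint; auto; unfold same_edge in *; [tauto | lra | lra].
Qed.

Lemma arc_at_end u v s : s = 0 \/ s = 1 -> exists w, (w = u \/ w = v) /\ arc u v s = point w.
Proof.
  intros [-> | ->]; [exists u | exists v]; unfold arc, point;
    rewrite ?parab_0, ?parab_1; auto.
Qed.

Lemma point_inj u v : vert u -> vert v -> point u = point v -> u = v.
Proof. intros Hu Hv Heq; injection Heq as Heq; apply INR_eq in Heq; auto. Qed.

Lemma book_planar : planar vert E.
Proof.
  exists point, arc; split; [exact point_inj | split].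
  - intros u v Huv; destruct (edge_ends _ _ Huv) as [_ [_ Hne]].
    assert (Hne' : INR (pos u) <> INR (pos v)) by (intro Heq; apply INR_eq in Heq; auto).
    split; [apply parab_cont|].
    split; [apply parab_0|]; split; [apply parab_1|]; split.
    + intros s t _ _ Heq; unfold arc, parab in Heq; injection Heq as Hx _.
      apply Rmult_eq_reg_r with (INR (pos v) - INR (pos u)); lra.
    + intros w s _ Hs Heq; apply (parab_off_axis _ _ (page u v) s Hne' Hs).
      unfold arc in Heq; rewrite Heq; reflexivity.
  - intros u v u' v' H1 H2 Hne s t Hs Ht Hmeet.
    assert (Hs' : s = 0 \/ s = 1).
    { assert (0 < s < 1 \/ s = 0 \/ s = 1) as [Hi|Hend] by lra; [|exact Hend].
      exfalso; exact (arcs_disjoint u v u' v' s t H1 H2 Hne Hi Ht Hmeet). }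
    assert (Ht' : t = 0 \/ t = 1).
    { assert (0 < t < 1 \/ t = 0 \/ t = 1) as [Hi|Hend] by lra; [|exact Hend].
      exfalso; apply (arcs_disjoint u' v' u v t s H2 H1); auto.
      intros [[-> ->] | [-> ->]]; tauto. }
    destruct (arc_at_end u v s Hs') as [w [Hw Hpw]].
    destruct (arc_at_end u' v' t Ht') as [w' [Hw' Hpw']].
    assert (Hvw : vert w) by (destruct Hw as [->| ->]; apply (edge_ends _ _ H1)).
    assert (Hvw' : vert w') by (destruct Hw' as [->| ->]; apply (edge_ends _ _ H2)).
    assert (w' = w) as -> by (apply point_inj; congruence).
    exists w; auto.
Qed.
End BookEmbedding.

Open Scope nat_scope.

(* A vertex (g,i,s) of K_{n,n,n} x K_2 lies in part g, has index i and
   side s.  An edge joins a false-side vertex to a true-side one; we record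
   the index of each. *)
Definition index (v : nat * nat * bool) : nat := let '(_, i, _) := v in i.
Definition side (v : nat * nat * bool) : bool := let '(_, _, s) := v in s.

Definition false_index (u v : nat * nat * bool) : nat := if side u then index v else index u.
Definition true_index (u v : nat * nat * bool) : nat := if side u then index u else index v.

Lemma edge_indices n u v : kadj n u v ->
  false_index u v < n /\ true_index u v < n /\
  false_index v u = false_index u v /\ true_index v u = true_index u v.
Proof.
  destruct u as [[g i] s], v as [[h j] t]; intros [[_ Hi] [[_ Hj] [_ Hst]]].
  unfold false_index, true_index, side, index; destruct s, t; tauto.
Qed.

(* The 6-cycle K_3 x K_2 is (0,F)-(1,T)-(2,F)-(0,T)-(1,F)-(2,T)-(0,F); its
   vertices are numbered 0..5 in this order and become consecutive blocks. *)
Definition block (v : nat * nat * bool) : nat :=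
  let '(g, _, s) := v in
  if s then match g with 0 => 3 | 1 => 1 | _ => 5 end
  else match g with 0 => 0 | 1 => 4 | _ => 2 end.

Definition upper_page (r r' : nat) : bool :=
  match r, r' with
  | 0, 1 | 1, 0 | 2, 3 | 3, 2 | 4, 5 | 5, 4 => true
  | _, _ => false
  end.

Section Layout.
Variables (n : nat) (P : nat -> nat -> Prop) (rank_false rank_true : nat -> nat).
Hypothesis rank_false_lt : forall i, i < n -> rank_false i < n.
Hypothesis rank_true_lt : forall j, j < n -> rank_true j < n.
Hypothesis rank_false_inj : forall i i', i < n -> i' < n -> rank_false i = rank_false i' -> i = i'.
Hypothesis rank_true_inj : forall j j', j < n -> j' < n -> rank_true j = rank_true j' -> j = j'.
Hypothesis P_monotone : forall i j i' j', i < n -> j < n -> i' < n -> j' < n ->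
  P i j -> P i' j' -> rank_false i < rank_false i' -> rank_true j <= rank_true j'.

(* False-side blocks are sorted by rank, true-side blocks by reversed rank,
   so that monotone edges between adjacent blocks are nested. *)
Definition slot (v : nat * nat * bool) : nat :=
  let '(_, i, s) := v in if s then n - 1 - rank_true i else rank_false i.

Definition layout_pos (v : nat * nat * bool) : nat := block v * n + slot v.

Definition class_edge (u v : nat * nat * bool) : Prop :=
  kadj n u v /\ P (false_index u v) (true_index u v).

Lemma layout_pos_inj u v : kvert n u -> kvert n v -> layout_pos u = layout_pos v -> u = v.
Proof.
  destruct u as [[g i] s], v as [[h j] t]; unfold kvert, layout_pos, slot, block; simpl.
  intros [Hg Hi] [Hh Hj] Heq.
  pose proof (rank_false_lt i Hi); pose proof (rank_true_lt i Hi).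
  pose proof (rank_false_lt j Hj); pose proof (rank_true_lt j Hj).
  destruct g as [|[|[|g]]]; try lia; destruct h as [|[|[|h]]]; try lia;
  destruct s, t; try lia;
  try (assert (i = j) by (apply rank_false_inj; auto; lia); subst; reflexivity);
  try (assert (i = j) by (apply rank_true_inj; auto; lia); subst; reflexivity).
Qed.

Lemma layout_edge_shape u v : class_edge u v -> layout_pos u < layout_pos v ->
  exists i j, i < n /\ j < n /\ P i j /\
  ( (u = (0, i, false) /\ v = (1, j, true))
  \/ (u = (1, j, true) /\ v = (2, i, false))
  \/ (u = (2, i, false) /\ v = (0, j, true))
  \/ (u = (0, j, true) /\ v = (1, i, false))
  \/ (u = (1, i, false) /\ v = (2, j, true))
  \/ (u = (0, i, false) /\ v = (2, j, true))).
Proof.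
  destruct u as [[g i] s], v as [[h j] t];
    unfold class_edge, kadj, kvert, layout_pos, slot, block, false_index, true_index, index, side; simpl.
  intros [[[Hg Hi] [[Hh Hj] [Hgh Hst]]] HP] Hlt.
  pose proof (rank_false_lt i Hi); pose proof (rank_true_lt i Hi).
  pose proof (rank_false_lt j Hj); pose proof (rank_true_lt j Hj).
  destruct g as [|[|[|g]]]; try lia; destruct h as [|[|[|h]]]; try lia;
  destruct s, t; try lia; try congruence.
  all: first [ exists i, j; repeat split; auto; tauto
             | exists j, i; repeat split; auto; tauto ].
Qed.

Lemma layout_no_interleaving u v u' v' : class_edge u v -> class_edge u' v' ->
  upper_page (block u) (block v) = upper_page (block u') (block v') ->
  layout_pos u < layout_pos v -> layout_pos u' < layout_pos v' ->
  ~ (layout_pos u < layout_pos u' /\ layout_pos u' < layout_pos v /\ layout_pos v < layout_pos v').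
Proof.
  intros H1 H2 Hpage L1 L2.
  destruct (layout_edge_shape u v H1 L1) as [i [j [Hi [Hj [HP S1]]]]].
  destruct (layout_edge_shape u' v' H2 L2) as [i' [j' [Hi' [Hj' [HP' S2]]]]].
  pose proof (P_monotone i j i' j' Hi Hj Hi' Hj' HP HP').
  pose proof (P_monotone i' j' i j Hi' Hj' Hi Hj HP' HP).
  pose proof (rank_false_lt i Hi); pose proof (rank_true_lt j Hj).
  pose proof (rank_false_lt i' Hi'); pose proof (rank_true_lt j' Hj').
  pose proof (rank_false_inj i i' Hi Hi'); pose proof (rank_true_inj j j' Hj Hj').
  clear L1 L2.
  destruct S1 as [[-> ->]|[[-> ->]|[[-> ->]|[[-> ->]|[[-> ->]|[-> ->]]]]]];
  destruct S2 as [[-> ->]|[[-> ->]|[[-> ->]|[[-> ->]|[[-> ->]|[-> ->]]]]]];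
  simpl in Hpage; try discriminate;
  unfold layout_pos, slot, block; simpl; lia.
Qed.

Lemma monotone_class_planar : planar (kvert n) class_edge.
Proof.
  apply (book_planar (kvert n) class_edge layout_pos (fun u v => upper_page (block u) (block v))).
  - exact layout_pos_inj.
  - intros u v Huv; split; [apply Huv|]; split; [apply Huv|].
    destruct u as [[g i] s], v as [[h j] t]; destruct Huv as [[[Hg Hi] [[Hh Hj] [Hgh Hst]]] _].
    unfold layout_pos, slot, block.
    pose proof (rank_false_lt i Hi); pose proof (rank_true_lt i Hi).
    pose proof (rank_false_lt j Hj); pose proof (rank_true_lt j Hj).
    destruct g as [|[|[|g]]]; try lia; destruct h as [|[|[|h]]]; try lia;
    destruct s, t; try lia; congruence.
  - intros u v Huv; destruct (edge_indices n u v (proj1 Huv)) as [_ [_ [Hf Ht]]]; split.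
    + destruct Huv as [[Hu [Hv Hadj]] HP]; unfold class_edge, kadj; rewrite Hf, Ht.
      refine (conj (conj Hv (conj Hu _)) HP).
      destruct u as [[g i] s], v as [[h j] t]; simpl in *; split; apply not_eq_sym; apply Hadj.
    + destruct u as [[g i] s], v as [[h j] t]; destruct Huv as [[[Hg _] [[Hh _] _]] _].
      unfold block; destruct g as [|[|[|g]]]; try lia; destruct h as [|[|[|h]]]; try lia;
      destruct s, t; reflexivity.
  - exact layout_no_interleaving.
Qed.
End Layout.

Lemma band_monotone (f g : nat -> nat) (k i j i' j' : nat) :
  f i <= g j + k <= f i + 1 -> f i' <= g j' + k <= f i' + 1 ->
  f i < f i' -> g j <= g j'.
Proof. lia. Qed.

Ltac case_tests := repeat match goal with
  | |- context [?a <=? ?b] => destruct (Nat.leb_spec a b)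
  | |- context [?a =? ?b] => destruct (Nat.eqb_spec a b)
  | H : context [?a <=? ?b] |- _ => destruct (Nat.leb_spec a b)
  | H : context [?a =? ?b] |- _ => destruct (Nat.eqb_spec a b)
  end.

Definition residue (n i j : nat) : nat := if j <=? i then i - j else n + i - j.

Definition colour (K n i j : nat) : nat :=
  let d := residue n i j in
  if d =? 0 then K else if d + 1 =? 2 * i then K else (d - 1) / 2.

Definition centre_rank (K n i : nat) : nat :=
  if i =? 0 then 1 else if i <=? K then 2 * (i - 1) else if i =? K + 1 then 2 * K
  else 2 * (n - i) + 1.

Definition false_rank (K n c i : nat) : nat :=
  if c =? K then centre_rank K n i else if i <=? c + 1 then c + 1 - i else n + c + 1 - i.

Definition true_rank (K n c j : nat) : nat :=
  if c =? K then centre_rank K n j else if c + 1 + j <=? n then n - c - 1 - j else 2 * n - c - 1 - j.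

Lemma residue_spec n i j : i < n -> j < n ->
  residue n i j < n /\ (j <= i -> residue n i j = i - j) /\ (i < j -> residue n i j = n + i - j).
Proof. intros; unfold residue; case_tests; lia. Qed.

Lemma half_cases d : d = 0 \/ d = 2 * ((d - 1) / 2) + 1 \/ d = 2 * ((d - 1) / 2) + 2.
Proof.
  pose proof (Nat.div_mod (d - 1) 2 ltac:(lia)); pose proof (Nat.mod_upper_bound (d - 1) 2 ltac:(lia)).
  lia.
Qed.

Section Colouring.
Variables K n : nat.
Hypothesis n_def : n = 2 * K + 1.
Hypothesis K_pos : 1 <= K.

Lemma colour_le i j : i < n -> j < n -> colour K n i j <= K.
Proof.
  intros Hi Hj; unfold colour; destruct (residue_spec n i j Hi Hj) as [Hd _].
  pose proof (half_cases (residue n i j)); case_tests; lia.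
Qed.

Lemma centre_rank_lt i : i < n -> centre_rank K n i < n.
Proof. intros; unfold centre_rank; case_tests; lia. Qed.

Lemma centre_rank_inj i i' : i < n -> i' < n -> centre_rank K n i = centre_rank K n i' -> i = i'.
Proof. intros; unfold centre_rank in *; case_tests; lia. Qed.

Lemma false_rank_lt c i : c <= K -> i < n -> false_rank K n c i < n.
Proof. intros; unfold false_rank; pose proof (centre_rank_lt i); case_tests; lia. Qed.

Lemma true_rank_lt c j : c <= K -> j < n -> true_rank K n c j < n.
Proof. intros; unfold true_rank; pose proof (centre_rank_lt j); case_tests; lia. Qed.

Lemma false_rank_inj c i i' : c <= K -> i < n -> i' < n -> false_rank K n c i = false_rank K n c i' -> i = i'.
Proof.
  intros; unfold false_rank in *; destruct (Nat.eqb_spec c K); [apply centre_rank_inj; auto|].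
  case_tests; lia.
Qed.

Lemma true_rank_inj c j j' : c <= K -> j < n -> j' < n -> true_rank K n c j = true_rank K n c j' -> j = j'.
Proof.
  intros; unfold true_rank in *; destruct (Nat.eqb_spec c K); [apply centre_rank_inj; auto|].
  case_tests; lia.
Qed.

(* The central lemma: in each colour class the true rank of j is the false
   rank of i or one less (c < K), resp. one more (c = K). *)
Lemma colour_band c i j : i < n -> j < n -> colour K n i j = c ->
  let k := if c =? K then 0 else 1 in
  false_rank K n c i <= true_rank K n c j + k <= false_rank K n c i + 1.
Proof.
  intros Hi Hj Hc; unfold colour in Hc; destruct (residue_spec n i j Hi Hj) as [Hd [Hle Hlt]].
  pose proof (half_cases (residue n i j)).
  set (d := residue n i j) in *; clearbody d.
  cbv zeta; unfold true_rank, false_rank, centre_rank; case_tests; subst c; lia.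
Qed.

Lemma colour_class_planar c : c <= K ->
  planar (kvert n) (fun u v => kadj n u v /\ colour K n (false_index u v) (true_index u v) = c).
Proof.
  intros Hc.
  apply (monotone_class_planar n (fun i j => colour K n i j = c) (false_rank K n c) (true_rank K n c)).
  - intros i; apply false_rank_lt; exact Hc.
  - intros j; apply true_rank_lt; exact Hc.
  - intros i i'; apply false_rank_inj; exact Hc.
  - intros j j'; apply true_rank_inj; exact Hc.
  - intros i j i' j' Hi Hj Hi' Hj' Hij Hij'.
    apply (band_monotone _ _ (if c =? K then 0 else 1)); apply colour_band; assumption.
Qed.
End Colouring.

Theorem lemma4p5 : forall p : nat,
  exists col : nat * nat * bool -> nat * nat * bool -> nat,
    (forall u v, kadj (4 * p + 3) u v ->
       (col u v < 2 * p + 2)%nat /\ col u v = col v u) /\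
    (forall c, (c < 2 * p + 2)%nat ->
       planar (kvert (4 * p + 3)) (fun u v => kadj (4 * p + 3) u v /\ col u v = c)).
Proof.
  intros p.
  set (K := 2 * p + 1).
  assert (n_def : 4 * p + 3 = 2 * K + 1) by (unfold K; lia).
  assert (K_pos : 1 <= K) by (unfold K; lia).
  exists (fun u v => colour K (4 * p + 3) (false_index u v) (true_index u v)); split.
  - intros u v Huv; destruct (edge_indices _ u v Huv) as [Hf [Ht [Hfs Hts]]].
    split; [|rewrite Hfs, Hts; reflexivity].
    pose proof (colour_le K _ n_def K_pos _ _ Hf Ht); unfold K in *; lia.
  - intros c Hc; apply colour_class_planar; [exact n_def | exact K_pos | unfold K; lia].
Qed.
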